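(* Fix any environment trace $e(\cdot)$ with time proportions $(\pi^e)_{e\in\mathcal E}$ and any arrival trace $N(\cdot)$ with traffic load $\rho=\lim_{t\to\infty}N(t)/t$. If $\rho\notin\mathcal R(\mathcal S^e,\pi^e,e\in\mathcal E)$, then under any admissible schedule $S(\cdot)$ the workload satisfies $$\limsup_{t\to\infty}\frac{X_q(t)}{t}>0\quad\text{for at least one queue } q\in\mathcal Q .$$
   Context: Fix integers $Q\ge1$ and $E\ge1$; queues are indexed by $q\in\mathcal Q=\{1,\dots,Q\}$ and environment states by $e\in\mathcal E=\{1,\dots,E\}$. For each $e\in\mathcal E$, $\mathcal S^e\subset\mathbb R^Q$ is a finite nonempty set of service vectors. Components may be negative: $S_q>0$ drains queue $q$ at rate $S_q$, while $S_q<0$ feeds queue $q$ at rate $-S_q$. Each $\mathcal S^e$ is complete: if $S\in\mathcal S^e$ and $S_q>0$, then the vector obtained from $S$ by replacing $S_q$ with $0$ also lies in $\mathcal S^e$. An environment trace is a measurable map $e:[0,\infty)\to\mathcal E$ such that $\pi^e=\lim_{t\to\infty}\frac1t\int_0^t\mathbf 1\{e(z)=e\}\,dz$ exists for each $e$, with $\pi^e>0$ and $\sum_e\pi^e=1$. An arrival trace is the cumulative workload arrival $N(t)=\int_0^tA(z)\,dz\in\mathbb R^Q_{\ge0}$. The rate $A$ may contain Dirac $\delta$-jumps, so $N$ is componentwise nondecreasing with left limits. Its traffic load $\rho=\lim_{t\to\infty}N(t)/t\in\mathbb R^Q_{\ge0}$ is assumed to exist. No other assumption is made on the trace, which may be adversarial.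 An admissible schedule is a measurable map $S:[0,\infty)\to\mathbb R^Q$ with $S(t)\in\mathcal S^{e(t)}$ for all $t$. The resulting workload is $X(t)=X(0)+N(t)-\int_0^tS(z)\,dz$, where $X(0)\in\mathbb R^Q_{\ge0}$, and it satisfies $X(t)\in\mathbb R^Q_{\ge0}$ for all $t$. The stability region is $$\mathcal R(\mathcal S^e,\pi^e,e\in\mathcal E)=\Big\{\rho\in\mathbb R^Q_{\ge0}:\rho\le\sum_{e\in\mathcal E}\pi^e\sum_{S\in\mathcal S^e}\phi^e_S S\ \text{for some } \phi^e_S\ge0 \text{ with } \sum_{S\in\mathcal S^e}\phi^e_S=1,\ e\in\mathcal E\Big\},$$ where the inequality is componentwise. *)

From Stdlib Require Import Reals List.
Open Scope R_scope.

Fixpoint rsum (n : nat) (f : nat -> R) : R :=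
  match n with
  | O => 0
  | S k => rsum k f + f k
  end.

Definition omeas_le (A : R -> Prop) (r : R) : Prop :=
  forall eps, 0 < eps ->
    exists (a b : nat -> R) (l : R),
      (forall n, a n <= b n) /\
      (forall x, A x -> exists n, a n <= x <= b n) /\
      infinite_sum (fun n => b n - a n) l /\
      l <= r + eps.

Definition has_measure (A : R -> Prop) (m : R) : Prop :=
  omeas_le A m /\ (forall r, omeas_le A r -> m <= r).

Definition lmeasurable (A : R -> Prop) : Prop :=
  forall B r, omeas_le B r ->
    exists r1 r2, omeas_le (fun x => B x /\ A x) r1 /\
                  omeas_le (fun x => B x /\ ~ A x) r2 /\ r1 + r2 <= r.

(* Lebesgue integral over [a,b] of a function taking finitely many values on
   [a,b]: sum over the distinct values v of v * lambda({z in [a,b] | f z = v}) *)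
Definition integral_fin (f : R -> R) (a b I : R) : Prop :=
  exists (vs ms : list R),
    NoDup vs /\ length ms = length vs /\
    (forall z, a <= z <= b -> In (f z) vs) /\
    (forall i, (i < length vs)%nat ->
       has_measure (fun z => a <= z <= b /\ f z = nth i vs 0) (nth i ms 0)) /\
    I = fold_right Rplus 0 (map (fun p => fst p * snd p) (combine vs ms)).

Definition lim_infty (f : R -> R) (l : R) : Prop :=
  forall eps, 0 < eps -> exists T, forall t, T <= t -> Rabs (f t - l) < eps.

Definition limsup_pos (f : R -> R) : Prop :=
  exists c, 0 < c /\ forall T, exists t, T <= t /\ c < f t.

(* vectors in R^Q are functions nat -> R, only coordinates q < Q matter *)
Definition vin (Q : nat) (v : nat -> R) (L : list (nat -> R)) : Prop :=
  exists w, In w L /\ forall q, (q < Q)%nat -> v q = w q.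

Definition in_region (Q E : nat) (Sset : nat -> list (nat -> R))
    (pi : nat -> R) (rho : nat -> R) : Prop :=
  (forall q, (q < Q)%nat -> 0 <= rho q) /\
  exists phi : nat -> nat -> R,
    (forall e i, (e < E)%nat -> (i < length (Sset e))%nat -> 0 <= phi e i) /\
    (forall e, (e < E)%nat -> rsum (length (Sset e)) (phi e) = 1) /\
    (forall q, (q < Q)%nat ->
       rho q <= rsum E (fun e => pi e *
                 rsum (length (Sset e))
                   (fun i => phi e i * nth i (Sset e) (fun _ => 0) q))).

(* We prove the contrapositive.  Suppose limsup X_q(t)/t <= 0 for every queue
   q.  Since X_q >= 0, X_q(t)/t -> 0, hence the cumulative service
   D_q(t) = X_q(0) + N_q(t) - X_q(t) satisfies D_q(t)/t -> rho_q.  Splitting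
   [0,t] by environment state e and by the service vector S^e_i in use gives
       D_q(t) = sum_e sum_i alloc^e_i(t) S^e_i(q),
       sum_i alloc^e_i(t) = time spent in state e in [0,t] ~ pi^e t,
   where alloc^e_i(t) is the Lebesgue measure of the times in [0,t] spent in
   state e using S^e_i.  The fractions alloc^e_i(t)/t lie in [0,1]; along a
   subsequence of times they converge, and their limits divided by pi^e are
   weights phi^e_i exhibiting rho in the region ([limit_in_region]). *)

From Stdlib Require Import Reals List Lra Lia Classical ClassicalEpsilon
  FunctionalExtensionality PropExtensionality Rtopology.
Open Scope R_scope.

Lemma rsum_ext n f g : (forall k, (k < n)%nat -> f k = g k) -> rsum n f = rsum n g.
Proof.
  revert f g; induction n as [|n IH]; intros f g H; simpl; [reflexivity|].
  rewrite (IH f g), H; auto.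
Qed.

Lemma rsum_zero n : rsum n (fun _ => 0) = 0.
Proof. induction n as [|n IH]; simpl; [|rewrite IH]; lra. Qed.

Lemma rsum_shift n f : rsum (S n) f = f O + rsum n (fun k => f (S k)).
Proof. revert f; induction n as [|n IH]; intros f; simpl in *; [|rewrite IH; simpl]; lra. Qed.

Lemma rsum_plus n f g : rsum n (fun k => f k + g k) = rsum n f + rsum n g.
Proof. induction n as [|n IH]; simpl; [|rewrite IH]; lra. Qed.

Lemma rsum_scal n c f : c * rsum n f = rsum n (fun k => c * f k).
Proof. induction n as [|n IH]; simpl; [|rewrite <- IH]; lra. Qed.

Lemma rsum_div n c f : rsum n (fun k => f k / c) = rsum n f / c.
Proof. unfold Rdiv. rewrite Rmult_comm, rsum_scal. apply rsum_ext; intros; lra. Qed.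

Lemma rsum_swap n m f :
  rsum n (fun j => rsum m (fun k => f j k)) = rsum m (fun k => rsum n (fun j => f j k)).
Proof.
  induction n as [|n IH]; simpl.
  - symmetry; apply rsum_zero.
  - rewrite IH, <- rsum_plus; reflexivity.
Qed.

Lemma rsum_single n f j0 :
  (j0 < n)%nat -> (forall k, (k < n)%nat -> k <> j0 -> f k = 0) -> rsum n f = f j0.
Proof.
  revert f; induction n as [|n IH]; intros f Hj H; [lia|]. simpl.
  destruct (Nat.eq_dec j0 n) as [->|Hne].
  - rewrite (rsum_ext n f (fun _ => 0)), rsum_zero by (intros; apply H; lia). lra.
  - rewrite H, (IH f) by (try lia; intros; apply H; lia). lra.
Qed.

Lemma fold_combine vs ms : length ms = length vs ->
  fold_right Rplus 0 (map (fun p => fst p * snd p) (combine vs ms)) =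
  rsum (length vs) (fun j => nth j vs 0 * nth j ms 0).
Proof.
  revert ms; induction vs as [|v vs IH]; intros [|m ms] H; try discriminate; [reflexivity|].
  simpl in H. cbn [length combine map fold_right fst snd].
  rewrite IH, rsum_shift by lia. reflexivity.
Qed.

Lemma fraction_unit a t : 0 < t -> 0 <= a <= t -> 0 <= a / t <= 1.
Proof.
  intros Ht Ha. assert (Hi : 0 < / t) by (apply Rinv_0_lt_compat; lra).
  unfold Rdiv; split; [apply Rmult_le_pos; lra|].
  rewrite <- (Rinv_r t) by lra. apply Rmult_le_compat_r; lra.
Qed.

Lemma cv_const c : Un_cv (fun _ => c) c.
Proof. intros eps He; exists O; intros; unfold Rdist; rewrite Rminus_diag, Rabs_R0; lra. Qed.

Lemma cv_nonneg u l : (forall n, 0 <= u n) -> Un_cv u l -> 0 <= l.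
Proof.
  intros Hu Hc. apply Rnot_lt_le; intros Hl.
  destruct (Hc (-l)) as [N HN]; [lra|]. specialize (HN N (le_n N)); specialize (Hu N).
  unfold Rdist in HN. rewrite Rabs_pos_eq in HN; lra.
Qed.

Lemma cv_rsum n (f : nat -> nat -> R) l :
  (forall k, (k < n)%nat -> Un_cv (f k) (l k)) ->
  Un_cv (fun m => rsum n (fun k => f k m)) (rsum n l).
Proof.
  revert f l; induction n as [|n IH]; intros f l H; simpl; [apply cv_const|].
  apply CV_plus; [apply IH; intros; apply H; lia | apply H; lia].
Qed.

Definition strictly_increasing (g : nat -> nat) : Prop := forall n, (g n < g (S n))%nat.

Lemma strictly_increasing_lt g :
  strictly_increasing g -> forall a b, (a < b)%nat -> (g a < g b)%nat.
Proof. intros Hg a b Hab; induction Hab; [apply Hg|]. specialize (Hg m); lia. Qed.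

Lemma strictly_increasing_ge g : strictly_increasing g -> forall n, (n <= g n)%nat.
Proof. intros Hg n; induction n; [lia|]. specialize (Hg n); lia. Qed.

Lemma strictly_increasing_comp g h :
  strictly_increasing g -> strictly_increasing h -> strictly_increasing (fun n => g (h n)).
Proof. intros Hg Hh n. apply strictly_increasing_lt; auto. Qed.

Lemma cv_subseq u l g : strictly_increasing g -> Un_cv u l -> Un_cv (fun n => u (g n)) l.
Proof.
  intros Hg Hu eps He. destruct (Hu eps He) as [N HN]. exists N.
  intros n Hn. apply HN. pose proof (strictly_increasing_ge g Hg n). lia.
Qed.

Lemma growing_cv_subseq u h L :
  Un_growing u -> (forall n, (n <= h n)%nat) -> Un_cv (fun n => u (h n)) L -> Un_cv u L.
Proof.
  intros Hu Hh Hc.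
  assert (Hle : forall k, u k <= L).
  { intros k. apply Rnot_lt_le; intros Hk.
    destruct (Hc (u k - L)) as [N HN]; [lra|].
    specialize (HN (max N k) (Nat.le_max_l _ _)). unfold Rdist in HN.
    pose proof (growing_prop u (h (max N k)) k Hu ltac:(specialize (Hh (max N k)); lia)).
    rewrite Rabs_pos_eq in HN; lra. }
  intros eps He. destruct (Hc eps He) as [N HN]. exists (h N).
  intros n Hn. specialize (HN N (le_n N)). unfold Rdist in *.
  pose proof (growing_prop u n (h N) Hu Hn). pose proof (Hle n). pose proof (Hle (h N)).
  rewrite Rabs_left1 in HN by lra. rewrite Rabs_left1 by lra. lra.
Qed.

Lemma bw_subseq u : (forall n, 0 <= u n <= 1) ->
  exists g l, strictly_increasing g /\ Un_cv (fun n => u (g n)) l.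
Proof.
  intros Hu.
  destruct (Bolzano_Weierstrass u (fun c => 0 <= c <= 1) (compact_P3 0 1) Hu) as [l Hl].
  assert (Hclose : forall N k, exists p, (N <= p)%nat /\ Rabs (u p - l) < / (INR k + 1)).
  { intros N k. assert (Hp : 0 < / (INR k + 1)).
    { apply Rinv_0_lt_compat. pose proof (pos_INR k); lra. }
    destruct (Hl (disc l (mkposreal _ Hp)) N) as [p [Hp1 Hp2]].
    - exists (mkposreal _ Hp). intros y Hy; exact Hy.
    - exists p; split; auto. }
  set (h := fun N k => proj1_sig (constructive_indefinite_description _ (Hclose N k))).
  assert (Hh : forall N k, (N <= h N k)%nat /\ Rabs (u (h N k) - l) < / (INR k + 1))
    by (intros N k; exact (proj2_sig (constructive_indefinite_description _ (Hclose N k)))).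
  set (g := fix g n := match n with O => h O O | S m => h (S (g m)) (S m) end).
  assert (Hg : forall n, Rabs (u (g n) - l) < / (INR n + 1)).
  { intros [|n]; apply Hh. }
  exists g, l. split.
  - intros n. simpl. destruct (Hh (S (g n)) (S n)); lia.
  - intros eps He. destruct (archimed_cor1 eps He) as [N [HN1 HN2]]. exists N.
    intros n Hn. unfold Rdist.
    assert (/ (INR n + 1) <= / INR N).
    { apply Rinv_le_contravar; [apply lt_0_INR; lia|]. apply le_INR in Hn. lra. }
    specialize (Hg n). lra.
Qed.

Lemma bw_family (I : Type) (idx : list I) (u : I -> nat -> R) :
  (forall x, In x idx -> forall n, 0 <= u x n <= 1) ->
  exists g (l : I -> R), strictly_increasing g /\
    forall x, In x idx -> Un_cv (fun n => u x (g n)) (l x).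
Proof.
  induction idx as [|x idx IH]; intros Hb.
  - exists (fun n => n), (fun _ => 0). split; [intros n; lia | intros x []].
  - destruct IH as (g1 & l1 & Hg1 & Hl1); [intros; apply Hb; simpl; auto|].
    destruct (bw_subseq (fun n => u x (g1 n))) as (g2 & lx & Hg2 & Hlx);
      [intros; apply Hb; simpl; auto|].
    exists (fun n => g1 (g2 n)),
      (fun y => if excluded_middle_informative (y = x) then lx else l1 y).
    split; [apply strictly_increasing_comp; auto|].
    intros y Hy. destruct (excluded_middle_informative (y = x)) as [->|Hne]; [exact Hlx|].
    destruct Hy as [Hy|Hy]; [congruence|].
    apply (cv_subseq (fun n => u y (g1 n))); auto.
Qed.

(** Lebesgue outer measure *)

Lemma omeas_nonneg A r : omeas_le A r -> 0 <= r.
Proof.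
  intros H. apply Rnot_lt_le; intros Hr.
  destruct (H (-r/2)) as (a & b & l & Hab & _ & Hsum & Hl); [lra|].
  assert (0 <= l); [|lra].
  apply (cv_nonneg (sum_f_R0 (fun n => b n - a n))); [|exact Hsum].
  intros n; apply cond_pos_sum; intros k; specialize (Hab k); lra.
Qed.

Lemma omeas_mono A B r : (forall x, A x -> B x) -> omeas_le B r -> omeas_le A r.
Proof.
  intros HAB H eps He. destruct (H eps He) as (a & b & l & H1 & H2 & H3 & H4).
  exists a, b, l; repeat split; auto.
Qed.

Lemma omeas_window A t : 0 <= t -> (forall z, A z -> 0 <= z <= t) -> omeas_le A t.
Proof.
  intros Ht HA eps He.
  exists (fun _ => 0), (fun n => match n with O => t | _ => 0 end), t. repeat split.
  - intros [|n]; lra.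
  - intros x Hx; exists O; apply HA in Hx; lra.
  - intros e' He'. exists O. intros n _. unfold Rdist.
    replace (sum_f_R0 _ n) with t; [rewrite Rminus_diag, Rabs_R0; lra|].
    induction n as [|n IH]; simpl; [lra|]. rewrite <- IH; lra.
  - lra.
Qed.

(* Interleaving two interval covers gives a cover of the union; its length is
   the sum of the two lengths. *)
Definition interleave (f g : nat -> R) (n : nat) : R :=
  if Nat.even n then f (Nat.div2 n) else g (Nat.div2 n).

Lemma interleave_even f g k : interleave f g (2 * k) = f k.
Proof. unfold interleave; rewrite Nat.even_even, Nat.div2_double; reflexivity. Qed.

Lemma interleave_odd f g k : interleave f g (S (2 * k)) = g k.
Proof.
  unfold interleave. rewrite Nat.even_succ, Nat.odd_mul, Nat.odd_2, Nat.div2_succ_double.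
  reflexivity.
Qed.

Lemma interleave_partial_sum f g n :
  sum_f_R0 (interleave f g) (S (2 * n)) = sum_f_R0 f n + sum_f_R0 g n.
Proof.
  induction n as [|n IH].
  - simpl. unfold interleave; simpl. reflexivity.
  - replace (S (2 * S n)) with (S (S (S (2 * n)))) by lia.
    rewrite tech5, tech5, IH.
    replace (S (S (2 * n))) with (2 * S n)%nat by lia.
    rewrite interleave_even, interleave_odd. simpl; lra.
Qed.

Lemma infinite_sum_interleave f g l1 l2 :
  (forall n, 0 <= f n) -> (forall n, 0 <= g n) ->
  infinite_sum f l1 -> infinite_sum g l2 -> infinite_sum (interleave f g) (l1 + l2).
Proof.
  intros Hf Hg H1 H2.
  apply (growing_cv_subseq _ (fun n => S (2 * n))); [| intros n; lia |].
  - intros n. simpl. unfold interleave.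
    destruct (Nat.even (S n)); [specialize (Hf (Nat.div2 (S n))) | specialize (Hg (Nat.div2 (S n)))];
      lra.
  - apply (Un_cv_ext (fun n => sum_f_R0 f n + sum_f_R0 g n)).
    + intros n; symmetry; apply interleave_partial_sum.
    + apply CV_plus; assumption.
Qed.

Lemma omeas_union A B r1 r2 :
  omeas_le A r1 -> omeas_le B r2 -> omeas_le (fun x => A x \/ B x) (r1 + r2).
Proof.
  intros HA HB eps He.
  destruct (HA (eps/2)) as (a1 & b1 & l1 & Ha1 & Hc1 & Hs1 & Hl1); [lra|].
  destruct (HB (eps/2)) as (a2 & b2 & l2 & Ha2 & Hc2 & Hs2 & Hl2); [lra|].
  exists (interleave a1 a2), (interleave b1 b2), (l1 + l2). repeat split.
  - intros n; unfold interleave; destruct (Nat.even n); auto.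
  - intros x [Hx|Hx].
    + destruct (Hc1 x Hx) as [n Hn]. exists (2 * n)%nat. rewrite !interleave_even; auto.
    + destruct (Hc2 x Hx) as [n Hn]. exists (S (2 * n)). rewrite !interleave_odd; auto.
  - replace (fun n => interleave b1 b2 n - interleave a1 a2 n)
      with (interleave (fun n => b1 n - a1 n) (fun n => b2 n - a2 n))
      by (apply functional_extensionality; intros n; unfold interleave;
          destruct (Nat.even n); reflexivity).
    apply infinite_sum_interleave; auto; intros n; [specialize (Ha1 n) | specialize (Ha2 n)]; lra.
  - lra.
Qed.

Definition bounded (A : R -> Prop) : Prop :=
  exists t, 0 <= t /\ forall z, A z -> 0 <= z <= t.

Lemma bounded_sub A B : bounded B -> (forall z, A z -> B z) -> bounded A.
Proof. intros (t & Ht & H) HAB. exists t; split; auto. Qed.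

(* The measure is the infimum of the admissible outer-measure bounds. *)
Lemma measure_exists A : bounded A -> exists m, has_measure A m.
Proof.
  intros (t & Ht & HA).
  set (Neg := fun y => exists r, omeas_le A r /\ y = - r).
  assert (Hb : bound Neg) by (exists 0; intros y (r & Hr & ->); apply omeas_nonneg in Hr; lra).
  assert (Hne : exists y, Neg y) by (exists (-t), t; split; auto; apply omeas_window; auto).
  destruct (completeness Neg Hb Hne) as [M [HM1 HM2]].
  exists (-M). split.
  - intros eps He.
    assert (exists y, Neg y /\ M - eps/2 < y) as (y & (r & Hr & ->) & Hy).
    { apply NNPP; intros Hn. assert (M <= M - eps/2); [|lra].
      apply HM2. intros y Hy. apply Rnot_lt_le. intros Hlt. apply Hn; eauto. }
    destruct (Hr (eps/2)) as (a & b & l & H1 & H2 & H3 & H4); [lra|].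
    exists a, b, l; repeat split; auto. lra.
  - intros r Hr. assert (- r <= M) by (apply HM1; exists r; auto). lra.
Qed.

Lemma has_measure_unique A m1 m2 : has_measure A m1 -> has_measure A m2 -> m1 = m2.
Proof. intros [H1 H1'] [H2 H2']. apply Rle_antisym; auto. Qed.

Definition mu (A : R -> Prop) : R := epsilon (inhabits 0) (fun m => has_measure A m).

Lemma mu_has_measure A : bounded A -> has_measure A (mu A).
Proof. intros H. unfold mu. apply epsilon_spec, measure_exists, H. Qed.

Lemma mu_eq A m : has_measure A m -> mu A = m.
Proof. intros H. apply (has_measure_unique A); [unfold mu; apply epsilon_spec; eauto | exact H]. Qed.

Lemma mu_ext A B : (forall z, A z <-> B z) -> mu A = mu B.
Proof.
  intros H. f_equal. apply functional_extensionality; intros z.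
  apply propositional_extensionality, H.
Qed.

Lemma mu_window A t : 0 <= t -> (forall z, A z -> 0 <= z <= t) -> 0 <= mu A <= t.
Proof.
  intros Ht HA. destruct (mu_has_measure A) as [H1 H2]; [exists t; auto|].
  split; [exact (omeas_nonneg _ _ H1) | apply H2, omeas_window; auto].
Qed.

Lemma mu_empty A : (forall z, ~ A z) -> mu A = 0.
Proof.
  intros HA. assert (H : 0 <= mu A <= 0) by (apply mu_window; [lra | intros z Hz; now exfalso; apply (HA z)]).
  lra.
Qed.

Lemma mu_split A B : lmeasurable A -> bounded B ->
  mu B = mu (fun z => B z /\ A z) + mu (fun z => B z /\ ~ A z).
Proof.
  intros HA HB.
  destruct (mu_has_measure B HB) as [HB1 HB2].
  destruct (mu_has_measure (fun z => B z /\ A z)) as [H11 H12];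
    [eapply bounded_sub; [exact HB | tauto]|].
  destruct (mu_has_measure (fun z => B z /\ ~ A z)) as [H21 H22];
    [eapply bounded_sub; [exact HB | tauto]|].
  apply Rle_antisym.
  - apply HB2. eapply omeas_mono; [|exact (omeas_union _ _ _ _ H11 H21)].
    intros z Hz; destruct (classic (A z)); tauto.
  - destruct (HA B (mu B) HB1) as (r1 & r2 & Hr1 & Hr2 & Hr).
    apply H12 in Hr1. apply H22 in Hr2. lra.
Qed.

(* [z] lies in [M k] but in no earlier [M j]: the cells of the partition
   generated by a finite family of sets. *)
Definition first_index (M : nat -> R -> Prop) (k : nat) (z : R) : Prop :=
  M k z /\ forall j, (j < k)%nat -> ~ M j z.

Lemma mu_partition n M B :
  (forall k, lmeasurable (M k)) -> bounded B ->
  (forall z, B z -> exists k, (k < n)%nat /\ M k z) ->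
  mu B = rsum n (fun k => mu (fun z => B z /\ first_index M k z)).
Proof.
  revert M B; induction n as [|n IH]; intros M B HM HB Hc.
  - apply mu_empty. intros z Hz. destruct (Hc z Hz) as [k [Hk _]]; lia.
  - rewrite (mu_split (M O) B (HM O) HB), rsum_shift.
    rewrite (IH (fun k => M (S k)) (fun z => B z /\ ~ M O z)).
    + f_equal.
      * apply mu_ext; unfold first_index; intros z; split; [|tauto].
        intros [H1 H2]; repeat split; auto; intros; lia.
      * apply rsum_ext; intros k Hk. apply mu_ext; unfold first_index; intros z; split.
        -- intros [[H1 H0] [H2 H3]]. repeat split; auto.
           intros [|j] Hj; [assumption | apply H3; lia].
        -- intros [H1 [H2 H3]]. repeat split; auto; intros; apply H3; lia.
    + intros; apply HM.
    + eapply bounded_sub; [exact HB | tauto].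
    + intros z [Hz Hn]. destruct (Hc z Hz) as [[|k] [Hk Hmk]]; [tauto|]. exists k; split; auto; lia.
Qed.

Lemma mu_partition2 K (L : nat -> nat) (C : nat -> R -> Prop) (Cs : nat -> nat -> R -> Prop) B :
  (forall k, lmeasurable (C k)) -> (forall k i, lmeasurable (Cs k i)) -> bounded B ->
  (forall z, B z -> exists k, (k < K)%nat /\ C k z) ->
  (forall k z, (k < K)%nat -> B z -> C k z -> exists i, (i < L k)%nat /\ Cs k i z) ->
  mu B = rsum K (fun k => rsum (L k) (fun i =>
           mu (fun z => B z /\ first_index C k z /\ first_index (Cs k) i z))).
Proof.
  intros HC HCs HB Hcov Hcovs. rewrite (mu_partition K C B HC HB Hcov).
  apply rsum_ext; intros k Hk.
  rewrite (mu_partition (L k) (Cs k) (fun z => B z /\ first_index C k z)).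
  - apply rsum_ext; intros i _. apply mu_ext; tauto.
  - apply HCs.
  - eapply bounded_sub; [exact HB | tauto].
  - intros z [Hz [Hk' _]]. apply Hcovs; auto.
Qed.

(** Integrals of finitely-valued functions *)

Lemma level_sum_constant (f : R -> R) (vs : list R) (A : R -> Prop) (c : R) :
  NoDup vs -> (forall z, A z -> In (f z) vs) -> (forall z, A z -> f z = c) ->
  rsum (length vs) (fun j => nth j vs 0 * mu (fun z => A z /\ f z = nth j vs 0)) = mu A * c.
Proof.
  intros Hnd Hcov Hc. destruct (classic (exists z, A z)) as [[z0 Hz0]|Hnone].
  - destruct (In_nth vs (f z0) 0 (Hcov z0 Hz0)) as [j0 [Hj0 Hv0]].
    rewrite (rsum_single _ _ j0 Hj0).
    + rewrite Hv0, (Hc z0 Hz0), (mu_ext _ A); [lra|].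
      intros z; split; [tauto|]. intros Hz; split; [|apply Hc]; auto.
    + intros j Hj Hne. rewrite mu_empty; [lra|]. intros z [Hz Hfz]. apply Hne.
      apply (proj1 (NoDup_nth vs 0) Hnd j j0 Hj Hj0).
      rewrite Hv0, <- Hfz, (Hc z), (Hc z0); auto.
  - assert (Hempty : forall z, ~ A z) by (intros z Hz; apply Hnone; eauto).
    rewrite (mu_empty A Hempty), (rsum_ext _ _ (fun _ => 0)), rsum_zero; [lra|].
    intros j _. rewrite mu_empty; [lra|]. intros z [Hz _]; exact (Hempty z Hz).
Qed.

Lemma integral_fin_partition2 (f : R -> R) (t I : R) (K : nat) (L : nat -> nat)
    (C : nat -> R -> Prop) (Cs : nat -> nat -> R -> Prop) (c : nat -> nat -> R) :
  0 <= t -> (forall k, lmeasurable (C k)) -> (forall k i, lmeasurable (Cs k i)) ->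
  (forall z, 0 <= z <= t -> exists k, (k < K)%nat /\ C k z) ->
  (forall k z, (k < K)%nat -> 0 <= z <= t -> C k z -> exists i, (i < L k)%nat /\ Cs k i z) ->
  (forall k i z, Cs k i z -> f z = c k i) ->
  integral_fin f 0 t I ->
  I = rsum K (fun k => rsum (L k) (fun i =>
        mu (fun z => 0 <= z <= t /\ first_index C k z /\ first_index (Cs k) i z) * c k i)).
Proof.
  intros Ht HC HCs Hcov Hcovs Hconst (vs & ms & Hnd & Hlen & Hval & Hms & ->).
  rewrite fold_combine by assumption.
  set (cell := fun k i z => 0 <= z <= t /\ first_index C k z /\ first_index (Cs k) i z).
  assert (Hlevel : forall j, (j < length vs)%nat -> nth j ms 0 =
      rsum K (fun k => rsum (L k) (fun i => mu (fun z => cell k i z /\ f z = nth j vs 0)))).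
  { intros j Hj. rewrite <- (mu_eq _ _ (Hms j Hj)).
    rewrite (mu_partition2 K L C Cs); auto.
    - apply rsum_ext; intros k _; apply rsum_ext; intros i _.
      apply mu_ext; unfold cell; tauto.
    - exists t; split; [exact Ht | tauto].
    - intros z [Hz _]; auto.
    - intros k z Hk [Hz _]; auto. }
  rewrite (rsum_ext _ _ (fun j => rsum K (fun k => rsum (L k) (fun i =>
      nth j vs 0 * mu (fun z => cell k i z /\ f z = nth j vs 0))))).
  - rewrite rsum_swap. apply rsum_ext; intros k _.
    rewrite rsum_swap. apply rsum_ext; intros i _.
    apply level_sum_constant; auto.
    + intros z [Hz _]; auto.
    + intros z (_ & _ & Hz & _); auto.
  - intros j Hj. rewrite Hlevel, rsum_scal by assumption.
    apply rsum_ext; intros k _. apply rsum_scal.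
Qed.

(** Occupation times of the schedule *)

Definition zero_vec : nat -> R := fun _ => 0.

Section Occupation.

Variables (Q E : nat) (Sset : nat -> list (nat -> R)) (env : R -> nat) (Sch : R -> nat -> R).
Hypothesis Henv : forall t, 0 <= t -> (env t < E)%nat.
Hypothesis Henv_meas : forall k, lmeasurable (fun z => 0 <= z /\ env z = k).
Hypothesis HSch : forall t, 0 <= t -> vin Q (Sch t) (Sset (env t)).
Hypothesis HSch_meas : forall v : nat -> R,
  lmeasurable (fun z => 0 <= z /\ forall q, (q < Q)%nat -> Sch z q = v q).

Definition in_state (e : nat) (z : R) : Prop := 0 <= z /\ env z = e.

Definition serves (e i : nat) (z : R) : Prop :=
  0 <= z /\ forall q, (q < Q)%nat -> Sch z q = nth i (Sset e) zero_vec q.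

(* Lebesgue measure of the times in [0,t] spent in state [e] serving with the
   [i]-th vector of S^e (the first one, if the schedule's vector is listed twice) *)
Definition alloc (e i : nat) (t : R) : R :=
  mu (fun z => 0 <= z <= t /\ first_index in_state e z /\ first_index (serves e) i z).

Lemma serves_cover e z :
  0 <= z -> env z = e -> exists i, (i < length (Sset e))%nat /\ serves e i z.
Proof.
  intros Hz He. destruct (HSch z Hz) as [w [Hw Hq]]. rewrite He in Hw.
  destruct (In_nth (Sset e) w zero_vec Hw) as [i [Hi Hn]].
  exists i; split; [exact Hi|]. split; [exact Hz|]. intros q Hq'. rewrite Hn; auto.
Qed.

Lemma first_index_state e z : first_index in_state e z <-> in_state e z.
Proof.
  unfold first_index, in_state; split; [tauto|].
  intros [Hz He]; repeat split; auto. intros j Hj [_ Hj']; lia.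
Qed.

Lemma alloc_window e i t : 0 <= t -> 0 <= alloc e i t <= t.
Proof. intros Ht. apply mu_window; [exact Ht | tauto]. Qed.

Lemma occupation_split e t : 0 <= t ->
  mu (fun z => 0 <= z <= t /\ env z = e) = rsum (length (Sset e)) (fun i => alloc e i t).
Proof.
  intros Ht. rewrite (mu_partition (length (Sset e)) (serves e)).
  - apply rsum_ext; intros i _. apply mu_ext; intros z.
    rewrite first_index_state; unfold in_state; tauto.
  - intros i; apply HSch_meas.
  - exists t; split; [exact Ht | tauto].
  - intros z [Hz He]. apply serves_cover; [lra | exact He].
Qed.

Lemma service_split t q Dq : 0 <= t -> (q < Q)%nat ->
  integral_fin (fun z => Sch z q) 0 t Dq ->
  Dq = rsum E (fun e => rsum (length (Sset e)) (fun i => alloc e i t * nth i (Sset e) zero_vec q)).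
Proof.
  intros Ht Hq.
  apply (integral_fin_partition2 _ t Dq E (fun e => length (Sset e)) in_state serves).
  - exact Ht.
  - intros e; apply Henv_meas.
  - intros e i; apply HSch_meas.
  - intros z Hz. exists (env z). split; [apply Henv; lra | split; [lra | reflexivity]].
  - intros e z _ _ [Hz He]. apply serves_cover; auto.
  - intros e i z [_ Hs]. apply Hs, Hq.
Qed.

End Occupation.

(** Long-run rates along the sampling times t_n = n + 1 *)

Definition sample (n : nat) : R := INR n + 1.

Lemma sample_pos n : 0 < sample n.
Proof. unfold sample; pose proof (pos_INR n); lra. Qed.

Lemma sample_unbounded : cv_infty sample.
Proof.
  intros M. destruct (INR_unbounded M) as [N HN]. exists N. intros n Hn.
  apply le_INR in Hn. unfold sample; lra.
Qed.

Lemma lim_infty_sample f l : lim_infty f l -> Un_cv (fun n => f (sample n)) l.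
Proof.
  intros Hf eps He. destruct (Hf eps He) as [T HT].
  destruct (sample_unbounded T) as [N HN]. exists N. intros n Hn.
  apply HT. left; apply HN, Hn.
Qed.

Lemma cv_div_sample c : Un_cv (fun n => c / sample n) 0.
Proof.
  replace 0 with (c * 0) by ring.
  apply CV_mult; [apply cv_const | apply cv_infty_cv_0, sample_unbounded].
Qed.

Lemma not_limsup_pos_sample f :
  (forall n, 0 <= f (sample n)) -> ~ limsup_pos f -> Un_cv (fun n => f (sample n)) 0.
Proof.
  intros Hf Hno eps He.
  assert (HT : exists T, forall t, T <= t -> f t <= eps / 2).
  { apply NNPP; intros Hn. apply Hno. exists (eps / 2); split; [lra|].
    intros T. apply NNPP; intros HT. apply Hn. exists T. intros t Ht.
    apply Rnot_lt_le; intros Hlt. apply HT; eauto. }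
  destruct HT as [T HT]. destruct (sample_unbounded T) as [N HN]. exists N.
  intros n Hn. specialize (HN n Hn). specialize (Hf n). unfold Rdist.
  rewrite Rminus_0_r, Rabs_pos_eq by exact Hf. pose proof (HT (sample n)). lra.
Qed.

Lemma service_rate (x0 r : R) (Nq Dq : R -> R) :
  (forall t, 0 <= t -> 0 <= x0 + Nq t - Dq t) ->
  lim_infty (fun t => Nq t / t) r ->
  ~ limsup_pos (fun t => (x0 + Nq t - Dq t) / t) ->
  Un_cv (fun n => Dq (sample n) / sample n) r.
Proof.
  intros Hnn HN Hno.
  assert (HX : Un_cv (fun n => (x0 + Nq (sample n) - Dq (sample n)) / sample n) 0).
  { apply (not_limsup_pos_sample (fun t => (x0 + Nq t - Dq t) / t)); [|exact Hno]. intros n. pose proof (sample_pos n).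
    unfold Rdiv. apply Rmult_le_pos; [apply Hnn; lra | left; apply Rinv_0_lt_compat; lra]. }
  pose proof (CV_minus _ _ _ _ (CV_plus _ _ _ _ (cv_div_sample x0) (lim_infty_sample _ _ HN)) HX)
    as Hlim.
  replace r with (0 + r - 0) by ring. revert Hlim. apply Un_cv_ext.
  intros n. pose proof (sample_pos n). simpl. field. lra.
Qed.

(** Closedness of the stability region *)

(* If a e i n in [0,1] are time fractions whose totals per state tend to
   pi^e > 0 and whose induced service rates tend to rho, then rho lies in the
   stability region: the weights are limits of a e i n / pi^e along a
   subsequence. *)
Lemma limit_in_region (Q E : nat) (Sset : nat -> list (nat -> R)) (pi rho : nat -> R)
    (a : nat -> nat -> nat -> R) :
  (forall e, (e < E)%nat -> 0 < pi e) ->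
  (forall e i n, (e < E)%nat -> (i < length (Sset e))%nat -> 0 <= a e i n <= 1) ->
  (forall e, (e < E)%nat ->
     Un_cv (fun n => rsum (length (Sset e)) (fun i => a e i n)) (pi e)) ->
  (forall q, (q < Q)%nat ->
     Un_cv (fun n => rsum E (fun e => rsum (length (Sset e))
                       (fun i => a e i n * nth i (Sset e) zero_vec q))) (rho q)) ->
  (forall q, (q < Q)%nat -> 0 <= rho q) ->
  in_region Q E Sset pi rho.
Proof.
  intros Hpi Ha Hocc Hserv Hrho.
  set (idx := flat_map (fun e => map (fun i => (e, i)) (seq 0 (length (Sset e)))) (seq 0 E)).
  assert (Hidx : forall e i, In (e, i) idx -> (e < E)%nat /\ (i < length (Sset e))%nat).
  { intros e i. unfold idx. rewrite in_flat_map. intros [e' [He' Hm]].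
    rewrite in_map_iff in Hm. destruct Hm as [i' [Heq Hi']].
    inversion Heq; subst. rewrite in_seq in *. lia. }
  assert (Hidx' : forall e i, (e < E)%nat -> (i < length (Sset e))%nat -> In (e, i) idx).
  { intros e i He Hi. unfold idx. rewrite in_flat_map. exists e.
    split; [rewrite in_seq; lia|]. rewrite in_map_iff. exists i. rewrite in_seq; split; [reflexivity | lia]. }
  destruct (bw_family _ idx (fun x n => a (fst x) (snd x) n)) as (g & l & Hg & Hl).
  { intros [e i] Hx n. destruct (Hidx e i Hx). apply Ha; assumption. }
  assert (Hcv : forall e i, (e < E)%nat -> (i < length (Sset e))%nat ->
                Un_cv (fun n => a e i (g n)) (l (e, i))).
  { intros e i He Hi. exact (Hl (e, i) (Hidx' e i He Hi)). }
  assert (Hl_nonneg : forall e i, (e < E)%nat -> (i < length (Sset e))%nat -> 0 <= l (e, i)).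
  { intros e i He Hi. apply (cv_nonneg _ _ (fun n => proj1 (Ha e i (g n) He Hi)) (Hcv e i He Hi)). }
  assert (Hl_sum : forall e, (e < E)%nat -> rsum (length (Sset e)) (fun i => l (e, i)) = pi e).
  { intros e He. apply (UL_sequence (fun n => rsum (length (Sset e)) (fun i => a e i (g n)))).
    - apply (cv_rsum _ (fun i n => a e i (g n))). intros i Hi; apply Hcv; auto.
    - apply (cv_subseq (fun n => rsum (length (Sset e)) (fun i => a e i n))); auto. }
  split; [exact Hrho|]. exists (fun e i => l (e, i) / pi e). split; [|split].
  - intros e i He Hi. unfold Rdiv. apply Rmult_le_pos; [auto|].
    left; apply Rinv_0_lt_compat; auto.
  - intros e He. rewrite rsum_div, Hl_sum by assumption. field. apply Rgt_not_eq, Hpi, He.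
  - intros q Hq. apply Req_le.
    apply (UL_sequence (fun n => rsum E (fun e => rsum (length (Sset e))
                          (fun i => a e i (g n) * nth i (Sset e) zero_vec q)))).
    + apply (cv_subseq (fun n => rsum E (fun e => rsum (length (Sset e))
                          (fun i => a e i n * nth i (Sset e) zero_vec q)))); auto.
    + replace (rsum E _) with (rsum E (fun e => rsum (length (Sset e))
                                  (fun i => l (e, i) * nth i (Sset e) zero_vec q))).
      * apply (cv_rsum _ (fun e n => rsum (length (Sset e))
                           (fun i => a e i (g n) * nth i (Sset e) zero_vec q))).
        intros e He. apply (cv_rsum _ (fun i n => a e i (g n) * nth i (Sset e) zero_vec q)).
        intros i Hi. apply CV_mult; [apply Hcv; auto | apply cv_const].
      * apply rsum_ext; intros e He. rewrite rsum_scal. apply rsum_ext; intros i _.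
        unfold zero_vec. field. apply Rgt_not_eq, Hpi, He.
Qed.

Theorem proposition1
  (Q E : nat) (HQ : (1 <= Q)%nat) (HE : (1 <= E)%nat)
  (* service sets S^e, e = 0..E-1: finite, nonempty, complete *)
  (Sset : nat -> list (nat -> R))
  (Hne : forall e, (e < E)%nat -> Sset e <> nil)
  (Hcompl : forall e v q, (e < E)%nat -> In v (Sset e) -> (q < Q)%nat -> 0 < v q ->
      vin Q (fun j => if Nat.eqb j q then 0 else v j) (Sset e))
  (* environment trace, measurable, with time proportions pi *)
  (env : R -> nat) (pi : nat -> R)
  (Henv : forall t, 0 <= t -> (env t < E)%nat)
  (Henv_meas : forall k, lmeasurable (fun z => 0 <= z /\ env z = k))
  (Hpi : forall k, (k < E)%nat ->
      0 < pi k /\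
      exists m : R -> R,
        (forall t, 0 <= t -> has_measure (fun z => 0 <= z <= t /\ env z = k) (m t)) /\
        lim_infty (fun t => m t / t) (pi k))
  (Hpi1 : rsum E pi = 1)
  (* arrival trace with traffic load rho *)
  (N : R -> nat -> R) (rho : nat -> R)
  (HN0 : forall t q, 0 <= t -> (q < Q)%nat -> 0 <= N t q)
  (HNmono : forall s t q, 0 <= s <= t -> (q < Q)%nat -> N s q <= N t q)
  (Hrho : forall q, (q < Q)%nat -> lim_infty (fun t => N t q / t) (rho q))
  (* admissible, measurable schedule S with cumulative service D *)
  (Sch : R -> nat -> R)
  (HSch : forall t, 0 <= t -> vin Q (Sch t) (Sset (env t)))
  (HSch_meas : forall v : nat -> R,
      lmeasurable (fun z => 0 <= z /\ forall q, (q < Q)%nat -> Sch z q = v q))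
  (D : R -> nat -> R)
  (HD : forall t q, 0 <= t -> (q < Q)%nat -> integral_fin (fun z => Sch z q) 0 t (D t q))
  (* initial workload and nonnegativity of X(t) = X(0) + N(t) - int_0^t S *)
  (X0 : nat -> R)
  (HX0 : forall q, (q < Q)%nat -> 0 <= X0 q)
  (HXnn : forall t q, 0 <= t -> (q < Q)%nat -> 0 <= X0 q + N t q - D t q) :
  ~ in_region Q E Sset pi rho ->
  exists q, (q < Q)%nat /\ limsup_pos (fun t => (X0 q + N t q - D t q) / t).
Proof.
  intros Hout. apply NNPP; intros Hno. apply Hout; clear Hout.
  (* otherwise every queue is served at its arrival rate *)
  assert (Hrate : forall q, (q < Q)%nat ->
            Un_cv (fun n => D (sample n) q / sample n) (rho q)).
  { intros q Hq. apply (service_rate (X0 q) (rho q) (fun t => N t q) (fun t => D t q)).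
    - intros t Ht; apply HXnn; auto.
    - apply Hrho, Hq.
    - intros Hpos. apply Hno. exists q; auto. }
  pose proof (fun t (Ht : 0 <= t) e => occupation_split Q Sset env Sch HSch HSch_meas e t Ht)
    as Hocc.
  pose proof (service_split Q E Sset env Sch Henv Henv_meas HSch HSch_meas) as Hserv.
  apply (limit_in_region Q E Sset pi rho
           (fun e i n => alloc Q Sset env Sch e i (sample n) / sample n)).
  - intros e He; apply Hpi, He.
  - intros e i n _ _. pose proof (sample_pos n).
    apply fraction_unit, alloc_window; lra.
  - intros e He. destruct (Hpi e He) as [_ [m [Hm Hlim]]].
    apply (Un_cv_ext (fun n => m (sample n) / sample n)); [|apply (lim_infty_sample (fun t => m t / t)), Hlim].
    intros n. pose proof (sample_pos n).
    rewrite rsum_div, <- Hocc, (mu_eq _ _ (Hm (sample n) ltac:(lra))) by lra. reflexivity.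
  - intros q Hq. apply (Un_cv_ext (fun n => D (sample n) q / sample n)); [|apply Hrate, Hq].
    intros n. pose proof (sample_pos n).
    assert (Ht : 0 <= sample n) by lra.
    rewrite (Hserv (sample n) q (D (sample n) q) Ht Hq (HD _ _ Ht Hq)), <- rsum_div.
    apply rsum_ext; intros e _. rewrite <- rsum_div.
    apply rsum_ext; intros i _. unfold Rdiv; ring.
  - intros q Hq. apply (cv_nonneg (fun n => N (sample n) q / sample n));
      [|apply (lim_infty_sample (fun t => N t q / t)), Hrho, Hq].
    intros n. pose proof (sample_pos n). unfold Rdiv.
    apply Rmult_le_pos; [apply HN0; auto; lra | left; apply Rinv_0_lt_compat; lra].
Qed.
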